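(* An instance of the UDODOSP is feasible if and only if there are integers $W^d$ for $0\le d\le D$ with $W^D-W^0\le N U_w$; $\;N D+W^0-W^D\le N U_o$; $\;W^{d+u_w}-W^{d-1}\le N u_w$ for all $1\le d\le D-u_w$; $\;N\le W^{d+u_o}-W^{d-1}$ for all $1\le d\le D-u_o$; and $\;r_l^d\le W^d-W^{d-1}\le r_u^d$ for all $1\le d\le D$.
   Context: An instance of the Days On Days Off Scheduling Problem (DODOSP) consists of integers $D\ge 1$ (days), $N\ge 1$ (workers), bounds $l_w,u_w,l_o,u_o,U_w,U_o\in\mathbb{N}$, and for each day $d\in\{1,\dots,D\}$ integers $0\le r_l^d\le r_u^d\le N$. A schedule is a map $f:\{n_1,\dots,n_N\}\times\{1,\dots,D\}\to\{\mathrm{ON},\mathrm{OFF}\}$ (not cyclic). A work period (resp. off period) of a worker is an inclusion-wise maximal set of consecutive days on which the worker is ON (resp. OFF). A schedule is feasible if on every day $d$ the number of workers that are ON lies in $[r_l^d,r_u^d]$, every work period has length between $l_w$ and $u_w$, every off period has length between $l_o$ and $u_o$, every worker is ON on at most $U_w$ days and OFF on at most $U_o$ days. An instance is feasible if a feasible schedule exists. The UDODOSP is the DODOSP restricted to instances with $l_w=l_o=1$. *)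

From mathcomp Require Import all_boot all_order all_algebra.
Set Implicit Arguments. Unset Strict Implicit. Unset Printing Implicit Defensive.

(* A schedule is f : nat -> nat -> bool, f n d = true meaning worker n is ON
   on day d. Workers are 0 .. N-1, days are 1 .. D; other values of f are
   irrelevant. *)

(* Every maximal run (within days 1..D) of days on which g takes value v
   has length in [lo, hi]. *)
Definition periods_ok (g : nat -> bool) (D : nat) (v : bool) (lo hi : nat) : Prop :=
  forall a b : nat, 1 <= a -> a <= b -> b <= D ->
    (forall d, a <= d -> d <= b -> g d = v) ->
    (a == 1) || (g a.-1 != v) ->
    (b == D) || (g b.+1 != v) ->
    lo <= b - a + 1 <= hi.

Definition feasible_schedule (D N lw uw lo uo Uw Uo : nat) (rl ru : nat -> nat)
    (f : nat -> nat -> bool) : Prop :=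
  (forall d, 1 <= d -> d <= D -> rl d <= \sum_(i < N) (f i d : nat) <= ru d) /\
  (forall i, i < N ->
     [/\ periods_ok (f i) D true lw uw,
         periods_ok (f i) D false lo uo,
         \sum_(1 <= d < D.+1) (f i d : nat) <= Uw &
         \sum_(1 <= d < D.+1) (~~ f i d : nat) <= Uo]).

Definition dodosp_feasible (D N lw uw lo uo Uw Uo : nat) (rl ru : nat -> nat) : Prop :=
  exists f : nat -> nat -> bool, feasible_schedule D N lw uw lo uo Uw Uo rl ru f.

From mathcomp Require Import all_boot all_algebra.
From mathcomp Require Import zify.
Import GRing.Theory.

Set Implicit Arguments.
Unset Strict Implicit.
Unset Printing Implicit Defensive.

(* W^d is the number of worker-days in days 1..d.  In a feasible schedule every
   window of u_w + 1 consecutive days contains an off day of each worker and every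
   window of u_o + 1 days an on day of each worker; summing over the workers gives
   the window inequalities, and the bounds U_w, U_o give the two global ones.
   Conversely, number the units of work 0, 1, 2, ... consecutively through the
   days, W^d - W^(d-1) <= N of them on day d, and give unit k to worker k mod N,
   who thus works at most once a day.  The units of a window of days form a block
   of consecutive integers, and a block of at most m N (at least m N) integers
   meets every residue class mod N at most (at least) m times. *)

Lemma sum_count (T : Type) (r : seq T) (a : pred T) :
  \sum_(x <- r) (a x : nat) = count a r.
Proof. by elim: r => [|x r IHr]; rewrite ?big_nil ?big_cons ?IHr. Qed.

Lemma sum_bool_negb m n (b : nat -> bool) :
  \sum_(m <= e < n) (b e : nat) + \sum_(m <= e < n) (~~ b e : nat) = n - m.
Proof.
rewrite -big_split /= -[n - m]muln1 -sum_nat_const_nat.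
by apply: eq_bigr => e _; case: (b e).
Qed.

Lemma index_iota_cat a b c : a <= b -> b <= c ->
  index_iota a b ++ index_iota b c = index_iota a c.
Proof.
move=> ab bc; rewrite /index_iota -{2}(subnKC ab) -iotaD.
by congr iota; lia.
Qed.

Local Notation residue N i := (fun k : nat => k %% N == i).

Section ResidueCounting.

Variable N : nat.
Hypothesis N_gt0 : 0 < N.

Lemma sum_count_residue s : \sum_(i < N) count (residue N i) s = size s.
Proof.
elim: s => [|k s IHs] /=; first by rewrite big1.
rewrite big_split /= IHs (bigD1 (Ordinal (ltn_pmod k N_gt0))) //= eqxx big1 // => j.
by rewrite -val_eqE /= eq_sym => /negPf ->.
Qed.

Lemma modn_inj_in_iota p c : c <= N -> {in iota p c &, injective (modn^~ N)}.
Proof.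
move=> cN k l; rewrite !mem_iota => /andP[pk kc] /andP[pl lc].
wlog kl : k l pk kc pl lc / k <= l => [wlog_kl | eq_kl].
  by case: (leqP k l) => [|/ltnW] le eq_mod; [|symmetry]; apply: wlog_kl.
apply/eqP; rewrite eqn_leq kl leqNgt; apply/negP => lt_kl.
have N_dvd : N %| l - k by rewrite -eqn_mod_dvd // eq_kl.
by rewrite -subn_gt0 in lt_kl; have := dvdn_leq lt_kl N_dvd; lia.
Qed.

Lemma count_residue_iota p c i : c <= N ->
  count (residue N i) (iota p c) = (i \in [seq k %% N | k <- iota p c]).
Proof.
move=> cN; rewrite -count_uniq_mem ?count_map //.
by rewrite map_inj_in_uniq ?iota_uniq //; apply: modn_inj_in_iota.
Qed.

Lemma has_count_residue_iota p c i : c <= N ->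
  has (residue N i) (iota p c) = count (residue N i) (iota p c) :> nat.
Proof. by move=> cN; rewrite count_residue_iota // -has_pred1 has_map. Qed.

Lemma count_residue_iotaN p i : i < N -> count (residue N i) (iota p N) = 1.
Proof.
move=> iN; rewrite count_residue_iota //.
have uniq_res : uniq [seq k %% N | k <- iota p N].
  by rewrite map_inj_in_uniq ?iota_uniq //; apply: modn_inj_in_iota.
have sub_res : {subset [seq k %% N | k <- iota p N] <= iota 0 N}.
  by move=> _ /mapP[k _ ->]; rewrite mem_iota ltn_pmod.
have size_res : size (iota 0 N) <= size [seq k %% N | k <- iota p N].
  by rewrite size_map !size_iota.
have [_ ->] := uniq_min_size uniq_res sub_res size_res.
by rewrite mem_iota add0n iN.
Qed.

Lemma count_residue_iota_mul p m i : i < N ->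
  count (residue N i) (iota p (m * N)) = m.
Proof.
move=> iN; elim: m p => [|m IHm] p; first by rewrite mul0n.
by rewrite mulSn iotaD count_cat count_residue_iotaN // IHm.
Qed.

Lemma count_residue_iota_le p n m i : i < N -> n <= m * N ->
  count (residue N i) (iota p n) <= m.
Proof.
move=> iN /subnKC nmN; rewrite -(count_residue_iota_mul p m iN) -nmN.
by rewrite iotaD count_cat leq_addr.
Qed.

Lemma count_residue_iota_ge p n m i : i < N -> m * N <= n ->
  m <= count (residue N i) (iota p n).
Proof.
move=> iN /subnKC <-; rewrite -{1}(count_residue_iota_mul p m iN).
by rewrite iotaD count_cat leq_addr.
Qed.

End ResidueCounting.

Section Periods.

Variables (g : nat -> bool) (D : nat) (v : bool).

Lemma run_extend_left a b : 0 < a ->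
  (forall e, a <= e -> e <= b -> g e = v) ->
  exists a', [/\ 0 < a' <= a, forall e, a' <= e -> e <= b -> g e = v
                & (a' == 1) || (g a'.-1 != v)].
Proof.
elim: a => [//|a IHa] _ run.
have [stop | /norP[a_neq0 /negPn/eqP ga]] := boolP ((a.+1 == 1) || (g a != v)).
  by exists a.+1; rewrite leqnn.
have run_a e : a <= e -> e <= b -> g e = v.
  by rewrite leq_eqVlt => /orP[/eqP<- //|]; apply: run.
have [|a' [/andP[a'0 a'a] run' max']] := IHa _ run_a; first by rewrite lt0n.
by exists a'; rewrite a'0 (leq_trans a'a).
Qed.

Lemma run_extend_right a b : b <= D ->
  (forall e, a <= e -> e <= b -> g e = v) ->
  exists b', [/\ b <= b' <= D, forall e, a <= e -> e <= b' -> g e = v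
                & (b' == D) || (g b'.+1 != v)].
Proof.
move=> /subnK; move: (D - b) => k <-; elim: k b => [|k IHk] b run.
  by exists b; rewrite add0n leqnn eqxx.
have [stop | /negPn/eqP gb] := boolP (g b.+1 != v).
  by exists b; rewrite leqnn leq_addl stop orbT.
have run_b e : a <= e -> e <= b.+1 -> g e = v.
  by move=> ae; rewrite leq_eqVlt ltnS => /orP[/eqP-> //|]; apply: run.
have [b' [/andP[bb' b'D] run' max']] := IHk b.+1 run_b.
by exists b'; rewrite addSnnS b'D (ltnW bb').
Qed.

Lemma periods_ok_lo1 lo hi : periods_ok g D v lo hi -> periods_ok g D v 1 hi.
Proof.
move=> ok a b a0 ab bD run maxa maxb.
by have /andP[_ ->] := ok a b a0 ab bD run maxa maxb; rewrite addn1.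
Qed.

Lemma periods_ok1P hi : periods_ok g D v 1 hi <->
  forall d, 0 < d -> d + hi <= D -> \sum_(d <= e < (d + hi).+1) (g e == v : nat) <= hi.
Proof.
split=> [ok d d0 dD | win a b a0 ab bD run _ _].
  rewrite leqNgt; apply/negP => full.
  have /allP on_v : all (fun e => g e == v) (index_iota d (d + hi).+1).
    rewrite all_count eqn_leq count_size -sum_count size_iota.
    by rewrite subSn ?leq_addr // addKn.
  have run e : d <= e -> e <= d + hi -> g e = v.
    by move=> de ed; apply/eqP/on_v; rewrite mem_index_iota de ltnS.
  have [a [/andP[a0 ad] runa maxa]] := run_extend_left d0 run.
  have [b [/andP[db bD] runb maxb]] := run_extend_right dD runa.
  have /andP[_] := ok a b a0 (leq_trans ad (leq_trans (leq_addr _ _) db)) bD runb maxa maxb.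
  by lia.
rewrite addn1 ltnS /= leqNgt; apply/negP => long.
have ahb : a + hi <= b by rewrite -leq_subRL.
have := win a a0 (leq_trans ahb bD).
rewrite (@eq_big_nat _ _ _ _ _ _ (fun=> 1)) ?sum_nat_const_nat => [|e /andP[ae]].
  by rewrite subSn ?leq_addr // addKn muln1 ltnn.
by rewrite ltnS => eah; rewrite run ?eqxx // (leq_trans eah ahb).
Qed.

End Periods.

Lemma on_periods_ok1P g D hi : periods_ok g D true 1 hi <->
  forall d, 0 < d -> d + hi <= D -> \sum_(d <= e < (d + hi).+1) (g e : nat) <= hi.
Proof.
have eq_sum m n : \sum_(m <= e < n) (g e == true : nat) = \sum_(m <= e < n) (g e : nat).
  by apply: eq_bigr => e _; rewrite eqb_id.
by rewrite periods_ok1P; split=> win d d0 dD; [rewrite -eq_sum | rewrite eq_sum]; apply: win.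
Qed.

Lemma off_periods_ok1P g D hi : periods_ok g D false 1 hi <->
  forall d, 0 < d -> d + hi <= D -> 0 < \sum_(d <= e < (d + hi).+1) (g e : nat).
Proof.
have eq_sum m n :
    \sum_(m <= e < n) (g e == false : nat) = n - m - \sum_(m <= e < n) (g e : nat).
  rewrite -(sum_bool_negb m n g) addKn.
  by apply: eq_bigr => e _; rewrite eqbF_neg.
rewrite periods_ok1P; split=> win d d0 dD; have := win d d0 dD;
  rewrite eq_sum subSn ?leq_addr // addKn; lia.
Qed.

Definition workload (N : nat) (f : nat -> nat -> bool) (n : nat) : nat :=
  \sum_(1 <= e < n.+1) \sum_(i < N) (f i e : nat).

Lemma workload_window N f d n : 0 < d -> d <= n.+1 ->
  workload N f n = workload N f d.-1 + \sum_(i < N) \sum_(d <= e < n.+1) (f i e : nat).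
Proof.
move=> d0 dn; rewrite /workload prednK // (big_cat_nat d0 dn) /=.
by rewrite [X in _ + X]exchange_big.
Qed.

Lemma workload_step N f d : 0 < d ->
  workload N f d = workload N f d.-1 + \sum_(i < N) (f i d : nat).
Proof. by case: d => // d _; rewrite /workload big_nat_recr. Qed.

Section Necessity.

Variables (D N lw uw lo uo Uw Uo : nat) (rl ru : nat -> nat) (f : nat -> nat -> bool).
Hypothesis feas : feasible_schedule D N lw uw lo uo Uw Uo rl ru f.

Local Notation W := (workload N f).

Lemma worker_periods i : i < N ->
  periods_ok (f i) D true 1 uw /\ periods_ok (f i) D false 1 uo.
Proof.
move=> iN; have [_ /(_ i iN) [on off _ _]] := feas.
by split; [apply: periods_ok_lo1 on | apply: periods_ok_lo1 off].
Qed.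

Lemma workload_total_on : W D <= N * Uw.
Proof.
rewrite /workload exchange_big -[N in N * _]card_ord -sum_nat_const /=.
by apply: leq_sum => i _; have [_ /(_ i (ltn_ord i)) []] := feas.
Qed.

Lemma workload_total_off : N * D <= W D + N * Uo.
Proof.
have on_off : \sum_(i < N) (\sum_(1 <= e < D.+1) (f i e : nat)
                            + \sum_(1 <= e < D.+1) (~~ f i e : nat)) = N * D.
  rewrite (eq_bigr (fun=> D)) ?sum_nat_const ?card_ord // => i _.
  by rewrite sum_bool_negb subSS subn0.
have -> : W D = \sum_(i < N) \sum_(1 <= e < D.+1) (f i e : nat) by exact: exchange_big.
rewrite -on_off big_split /= leq_add2l.
rewrite -[N in N * _]card_ord -sum_nat_const /=.
by apply: leq_sum => i _; have [_ /(_ i (ltn_ord i)) []] := feas.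
Qed.

Lemma workload_on_window d : 0 < d -> d + uw <= D -> W (d + uw) <= W d.-1 + N * uw.
Proof.
move=> d0 dD; have d_le : d <= (d + uw).+1 by rewrite leqW ?leq_addr.
rewrite (workload_window N f d0 d_le) leq_add2l -[N in N * _]card_ord -sum_nat_const.
apply: leq_sum => i _.
by have [/on_periods_ok1P win _] := worker_periods (ltn_ord i); apply: win.
Qed.

Lemma workload_off_window d : 0 < d -> d + uo <= D -> W d.-1 + N <= W (d + uo).
Proof.
move=> d0 dD; have d_le : d <= (d + uo).+1 by rewrite leqW ?leq_addr.
rewrite (workload_window N f d0 d_le) leq_add2l -[N in N <= _]muln1.
rewrite -[N in N * _]card_ord -sum_nat_const; apply: leq_sum => i _.
by have [_ /off_periods_ok1P win] := worker_periods (ltn_ord i); apply: win.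
Qed.

End Necessity.

Section RoundRobin.

Variables (N D : nat) (P : nat -> nat).
Hypothesis N_gt0 : 0 < N.
Hypothesis P_step : forall d, 0 < d -> d <= D -> P d.-1 <= P d <= P d.-1 + N.

Definition round_robin (i d : nat) : bool := has (residue N i) (index_iota (P d.-1) (P d)).

Lemma round_robin_count i d : 0 < d -> d <= D ->
  round_robin i d = count (residue N i) (index_iota (P d.-1) (P d)) :> nat.
Proof.
move=> d0 dD; have /andP[_ step] := P_step d0 dD.
by apply: has_count_residue_iota => //; rewrite leq_subLR.
Qed.

Lemma round_robin_staffing d : 0 < d -> d <= D ->
  \sum_(i < N) (round_robin i d : nat) = P d - P d.-1.
Proof.
move=> d0 dD; rewrite (eq_bigr _ (fun (i : 'I_N) _ => round_robin_count i d0 dD)).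
by rewrite sum_count_residue // size_iota.
Qed.

Lemma P_homo m n : m <= n -> n <= D -> P m <= P n.
Proof.
elim: n => [|n IHn]; first by rewrite leqn0 => /eqP->.
rewrite leq_eqVlt ltnS => /orP[/eqP-> // | mn] nD.
by have /andP[step _] := P_step (ltn0Sn n) nD; apply: leq_trans (IHn mn (ltnW nD)) step.
Qed.

Lemma round_robin_window i m n : m <= n -> n <= D ->
  \sum_(m.+1 <= e < n.+1) (round_robin i e : nat)
    = count (residue N i) (index_iota (P m) (P n)).
Proof.
elim: n => [|n IHn]; first by rewrite leqn0 => /eqP-> _; rewrite big_geq // /index_iota subnn.
rewrite leq_eqVlt ltnS => /orP[/eqP-> | mn] nD; first by rewrite big_geq // /index_iota subnn.
have /andP[step _] := P_step (ltn0Sn n) nD.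
rewrite big_nat_recr //= IHn ?(ltnW nD) // round_robin_count // -count_cat.
by rewrite index_iota_cat // P_homo ?(ltnW nD).
Qed.

Lemma round_robin_feasible uw uo Uw Uo rl ru :
  P D <= P 0 + N * Uw ->
  N * D + P 0 <= P D + N * Uo ->
  (forall d, 0 < d -> d + uw <= D -> P (d + uw) <= P d.-1 + N * uw) ->
  (forall d, 0 < d -> d + uo <= D -> P d.-1 + N <= P (d + uo)) ->
  (forall d, 0 < d -> d <= D -> rl d <= P d - P d.-1 <= ru d) ->
  feasible_schedule D N 1 uw 1 uo Uw Uo rl ru round_robin.
Proof.
move=> tot_on tot_off win_on win_off day.
split=> [d d0 dD | i iN]; first by rewrite round_robin_staffing ?day.
have window d k : 0 < d -> d + k <= D ->
    \sum_(d <= e < (d + k).+1) (round_robin i e : nat)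
      = count (residue N i) (iota (P d.-1) (P (d + k) - P d.-1)).
  move=> d0 dkD; rewrite -{1}(prednK d0) round_robin_window //.
  by rewrite -[d.-1]addn0 leq_add ?leq_pred.
have total : \sum_(1 <= e < D.+1) (round_robin i e : nat)
    = count (residue N i) (iota (P 0) (P D - P 0)).
  exact: round_robin_window.
split.
- apply/on_periods_ok1P => d d0 dD; rewrite window //.
  by apply: count_residue_iota_le => //; rewrite leq_subLR mulnC win_on.
- apply/off_periods_ok1P => d d0 dD; rewrite window //.
  apply: (@count_residue_iota_ge _ N_gt0 _ _ 1) => //.
  by have := win_off d d0 dD; lia.
- by rewrite total; apply: count_residue_iota_le => //; rewrite leq_subLR mulnC.
- have off_days : D - Uo <= count (residue N i) (iota (P 0) (P D - P 0)).
    by apply: count_residue_iota_ge => //; rewrite mulnBl; lia.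
  by have := sum_bool_negb 1 D.+1 (round_robin i); rewrite total; lia.
Qed.

End RoundRobin.

Local Open Scope ring_scope.

Definition admissible_workload (D N uw uo Uw Uo : nat) (rl ru : nat -> nat)
    (W : nat -> int) :=
  [/\ W D - W 0%N <= (N * Uw)%:Z,
      (N * D)%:Z + W 0%N - W D <= (N * Uo)%:Z,
      (forall d, (1 <= d)%N -> (d <= D - uw)%N -> W (d + uw)%N - W d.-1 <= (N * uw)%:Z),
      (forall d, (1 <= d)%N -> (d <= D - uo)%N -> N%:Z <= W (d + uo)%N - W d.-1) &
      (forall d, (1 <= d)%N -> (d <= D)%N ->
         (rl d)%:Z <= W d - W d.-1 /\ W d - W d.-1 <= (ru d)%:Z)].

Lemma feasible_admissible_workload D N lw uw lo uo Uw Uo rl ru f :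
  feasible_schedule D N lw uw lo uo Uw Uo rl ru f ->
  admissible_workload D N uw uo Uw Uo rl ru (fun d => (workload N f d)%:Z).
Proof.
move=> feas; have W0 : workload N f 0 = 0%N by rewrite /workload big_geq.
split=> [||d d0 dD|d d0 dD|d d0 dD].
- by have := workload_total_on feas; lia.
- by have := workload_total_off feas; lia.
- have dD' : (d + uw <= D)%N by lia.
  by have := workload_on_window feas d0 dD'; lia.
- have dD' : (d + uo <= D)%N by lia.
  by have := workload_off_window feas d0 dD'; lia.
- have [/(_ d d0 dD) day _] := feas.
  by have := workload_step N f d0; lia.
Qed.

Lemma admissible_workload_feasible D N uw uo Uw Uo rl ru W : (0 < N)%N ->
  (forall d, (0 < d)%N -> (d <= D)%N -> (ru d <= N)%N) ->
  admissible_workload D N uw uo Uw Uo rl ru W ->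
  dodosp_feasible D N 1 uw 1 uo Uw Uo rl ru.
Proof.
move=> N0 ruN [tot_on tot_off win_on win_off day].
pose P d := `|W d - W 0%N|%N.
have PW d : (d <= D)%N -> (P d)%:Z = W d - W 0%N.
  elim: d => [|d IHd] dD; first by rewrite /P subrr.
  have [/= rl_le _] := day d.+1 isT dD.
  by have := IHd (ltnW dD); rewrite /P; lia.
have PW0 : P 0%N = 0%N by rewrite /P subrr.
have PWpred d : (d <= D)%N -> (P d.-1)%:Z = W d.-1 - W 0%N.
  by move=> dD; apply: PW; rewrite (leq_trans (leq_pred d) dD).
have PWD := PW D (leqnn D).
exists (round_robin N P); apply: (round_robin_feasible N0).
- move=> d d0 dD; have := PW d dD; have := PWpred d dD.
  by have := day d d0 dD; have := ruN d d0 dD; lia.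
- by lia.
- by lia.
- move=> d d0 dD; have := PW _ dD; have := PWpred d (leq_trans (leq_addr _ _) dD).
  have dD' : (d <= D - uw)%N by lia.
  by have := win_on d d0 dD'; lia.
- move=> d d0 dD; have := PW _ dD; have := PWpred d (leq_trans (leq_addr _ _) dD).
  have dD' : (d <= D - uo)%N by lia.
  by have := win_off d d0 dD'; lia.
- move=> d d0 dD; have := PW d dD; have := PWpred d dD.
  by have := day d d0 dD; lia.
Qed.

Theorem corollary4p8 (D N uw uo Uw Uo : nat) (rl ru : nat -> nat) :
  (1 <= D)%N -> (1 <= N)%N ->
  (forall d, (1 <= d)%N -> (d <= D)%N -> (rl d <= ru d)%N /\ (ru d <= N)%N) ->
  dodosp_feasible D N 1 uw 1 uo Uw Uo rl ru <->
  exists W : nat -> int,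
    [/\ W D - W 0%N <= (N * Uw)%:Z,
        (N * D)%:Z + W 0%N - W D <= (N * Uo)%:Z,
        (forall d, (1 <= d)%N -> (d <= D - uw)%N -> W (d + uw)%N - W d.-1 <= (N * uw)%:Z),
        (forall d, (1 <= d)%N -> (d <= D - uo)%N -> N%:Z <= W (d + uo)%N - W d.-1) &
        (forall d, (1 <= d)%N -> (d <= D)%N ->
           (rl d)%:Z <= W d - W d.-1 /\ W d - W d.-1 <= (ru d)%:Z)].
Proof.
move=> _ N0 bounds; split=> [[f feas] | [W adm]].
  by exists (fun d => (workload N f d)%:Z); apply: feasible_admissible_workload feas.
apply: admissible_workload_feasible N0 _ adm.
by move=> d d0 dD; have [] := bounds d d0 dD.
Qed.
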